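(* For a generic twisted $(N,1)$ spiral ($N\ge5$, $N\not\equiv1\pmod3$) with invariants $a_k,b_k,c_k$ from its normalized lift: (i) $c_N=\det\rho_{N+1}$ and $c_Nc_{-1}=A_0A_1$; consequently $A_0=\dfrac{a_{N-1}c_N}{A_1a_0}$ and $b_{-1}=\dfrac1{a_0}\Big(\dfrac{a_{N-1}c_N}{A_1a_0}-1\Big)$; (ii) $c_{N+1}(c_N+b_Na_{N-2})=c_N$ and $c_N+b_Na_{N-2}=\dfrac{c_N^2}{A_1A_2}$; consequently $b_N=\dfrac{c_N}{a_{N-2}}\Big(\dfrac{c_N}{A_1A_2}-1\Big)$ and $c_{N+1}=\dfrac{A_1A_2}{c_N}$; (iii) $a_{-1}=\dfrac{c_{N+1}a_{N-1}a_{N-2}}{c_Na_0}(1+a_1b_0)=\dfrac{a_{N-1}^2a_{N-2}A_1A_2}{a_0^2c_NA_0}$.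
   Context: Points lie in $\mathbb{RP}^2$; $M\in PSL(3,\mathbb R)$ is identified with a representing matrix in $SL(3,\mathbb R)$. For a bi-infinite sequence $(p_k)_{k\in\mathbb Z}$ in $\mathbb{RP}^2$, $T(p_k)=\overline{p_{k-1}p_{k+1}}\cap\overline{p_kp_{k+2}}$. A twisted $(N,1)$ pentagram spiral with monodromy $M$ is a bi-infinite sequence $(p_k)$ with $p_{N+k}=M\cdot T(p_{k-1})$ for all $k$, such that $p_{N+1}$ lies on the segment joining $p_N$ and $M\cdot p_1$; ''generic'' means all determinants and denominators appearing are nonzero. For vectors define $T(V_i)=(V_{i-1}\times V_{i+1})\times(V_i\times V_{i+2})$, $\overline T(V_i)=c_{i+1}(V_i\times V_{i+1})\times(V_{i-2}\times V_{i-1})$, $c_i=\det(V_{i+1},V_{i+2},V_{i+3})/\det(V_i,V_{i+1},V_{i+2})$. The normalized lift is the unique sequence $V_k$ with $[V_k]=p_k$, $V_{N+i}=MT(V_{i-1})$ and $V_{-i}=M^{-1}\overline T(V_{N-i+1})$ for $i\ge1$, and $\det(V_i,V_{i+1},V_{i+2})=1$ for $i=0,\dots,N$. Invariants: $V_{i+3}=a_iV_{i+2}+b_iV_{i+1}+c_iV_i$ (so $c_i=1$ for $0\le i\le N-1$); $A_i=c_i+a_ib_{i-1}$; $\rho_i=(V_i,V_{i+1},V_{i+2})$. *)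

From HB Require Import structures.
From mathcomp Require Import all_boot all_order all_algebra.
Set Implicit Arguments. Unset Strict Implicit. Unset Printing Implicit Defensive.
Import Order.TTheory GRing.Theory Num.Theory.
Local Open Scope ring_scope.

Definition vco (R : fieldType) (u : 'cV[R]_3) (k : nat) : R := u (inord k) 0.

Definition cross (R : fieldType) (u v : 'cV[R]_3) : 'cV[R]_3 :=
  \col_(i < 3)
    (if (i : nat) == 0%N then vco u 1 * vco v 2 - vco u 2 * vco v 1
     else if (i : nat) == 1%N then vco u 2 * vco v 0 - vco u 0 * vco v 2
     else vco u 0 * vco v 1 - vco u 1 * vco v 0).

Definition mx3 (R : fieldType) (u v w : 'cV[R]_3) : 'M[R]_3 :=
  \matrix_(i < 3, j < 3)
    (if (j : nat) == 0%N then u i 0 else if (j : nat) == 1%N then v i 0 else w i 0).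

Definition det3 (R : fieldType) (u v w : 'cV[R]_3) : R := \det (mx3 u v w).

Definition rho (R : fieldType) (V : int -> 'cV[R]_3) (i : int) : 'M[R]_3 :=
  mx3 (V i) (V (i + 1)) (V (i + 2)).

Definition cinv (R : fieldType) (V : int -> 'cV[R]_3) (i : int) : R :=
  det3 (V (i + 1)) (V (i + 2)) (V (i + 3)) / det3 (V i) (V (i + 1)) (V (i + 2)).

Definition Tv (R : fieldType) (V : int -> 'cV[R]_3) (i : int) : 'cV[R]_3 :=
  cross (cross (V (i - 1)) (V (i + 1))) (cross (V i) (V (i + 2))).

Definition Tbar (R : fieldType) (V : int -> 'cV[R]_3) (i : int) : 'cV[R]_3 :=
  cinv V (i + 1) *: cross (cross (V i) (V (i + 1))) (cross (V (i - 2)) (V (i - 1))).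

Definition Ainv (R : fieldType) (V : int -> 'cV[R]_3) (a b : int -> R) (i : int) : R :=
  cinv V i + a i * b (i - 1).

(* The points p_k = [V_k] form a twisted (N,1) pentagram spiral with monodromy M:
   V_k are nonzero (so represent points of RP^2), p_{N+k} = M . T(p_{k-1}) for all
   k (projective equality = parallel representatives), and p_{N+1} lies on the line
   through p_N and M.p_1. *)
Definition twisted_spiral (R : fieldType) (N : nat) (M : 'M[R]_3)
    (V : int -> 'cV[R]_3) : Prop :=
  [/\ forall k : int, V k != 0,
      forall k : int, Tv V (k - 1) != 0,
      forall k : int, cross (V (N%:Z + k)) (M *m Tv V (k - 1)) = 0
    & det3 (V (N%:Z + 1)) (V N%:Z) (M *m V 1) = 0].

Definition normalized_lift (R : fieldType) (N : nat) (M : 'M[R]_3)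
    (V : int -> 'cV[R]_3) : Prop :=
  [/\ forall i : int, 0 < i -> V (N%:Z + i) = M *m Tv V (i - 1),
      forall i : int, 0 < i -> V (- i) = invmx M *m Tbar V (N%:Z - i + 1)
    & forall i : nat, (i <= N)%N -> \det (rho V i%:Z) = 1].

Definition generic (R : fieldType) (V : int -> 'cV[R]_3) (a b : int -> R) : Prop :=
  [/\ forall i : int, \det (rho V i) != 0,
      forall i : int, a i != 0
    & forall i : int, Ainv V a b i != 0].

From HB Require Import structures.
From mathcomp Require Import all_boot all_order all_algebra.
From mathcomp Require Import ring zify.
Set Implicit Arguments. Unset Strict Implicit. Unset Printing Implicit Defensive.
Import Order.TTheory GRing.Theory Num.Theory.
Local Open Scope ring_scope.

(* Work in the frame V_{-1}, V_0, V_1 of the normalized lift.  The forward lift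
   gives V_{N+k} = M T(V_{k-1}) for k >= 1, and since T(V_{-1}) is a multiple of
   W = V_1 - b_{-2} V_{-1}, the twist condition gives V_N = L M W for a scalar L.
   Determinants of three consecutive T(V_i) factor through the A's, which yields
   c_N = det rho_{N+1} = A_0 A_1 / c_{-1} and c_{N+1} c_N = det rho_{N+2} = A_1 A_2.
   The backward lift V_{-1} = M^-1 Tbar(V_N) expresses c_{N+1} and a_{-1} through L,
   the normalization det rho_N = 1 pins L down, V_{-2} = M^-1 Tbar(V_{N-1}) together
   with the recurrence at N - 1 gives a_{N-1}, and the recurrence at N gives b_N.
   Eliminating L yields (i)-(iii). *)

Lemma det_mx3E (R : comNzRingType) (A : 'M[R]_3) (f : nat -> nat -> R) :
  (forall i j : 'I_3, A i j = f i j) ->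
  \det A = f 0 0 * (f 1 1 * f 2 2 - f 1 2 * f 2 1)
         - f 0 1 * (f 1 0 * f 2 2 - f 1 2 * f 2 0)
         + f 0 2 * (f 1 0 * f 2 1 - f 1 1 * f 2 0).
Proof.
move=> Af; rewrite (expand_det_row _ ord0) !big_ord_recl big_ord0 /cofactor.
rewrite !(expand_det_row _ ord0) !big_ord_recl !big_ord0 /cofactor.
by rewrite !det_mx11 !mxE !Af /= /bump /=; ring.
Qed.

Section Coordinates.
Variable R : fieldType.
Implicit Types (u v w : 'cV[R]_3) (k : R).

Lemma vcoP u v :
  vco u 0 = vco v 0 -> vco u 1 = vco v 1 -> vco u 2 = vco v 2 -> u = v.
Proof.
move=> e0 e1 e2; apply/matrixP => i j; rewrite (ord1 j).
by have := inord_val i; case: i => [[|[|[|m]]] lt_i3] //= <-.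
Qed.

Lemma vcoD u v i : vco (u + v) i = vco u i + vco v i. Proof. by rewrite /vco mxE. Qed.
Lemma vcoN u i : vco (- u) i = - vco u i. Proof. by rewrite /vco mxE. Qed.
Lemma vcoZ k u i : vco (k *: u) i = k * vco u i. Proof. by rewrite /vco mxE. Qed.
Lemma vco0 i : vco (0 : 'cV[R]_3) i = 0. Proof. by rewrite /vco mxE. Qed.

Lemma vco_cross0 u v : vco (cross u v) 0 = vco u 1 * vco v 2 - vco u 2 * vco v 1.
Proof. by rewrite {1}/vco mxE inordK. Qed.
Lemma vco_cross1 u v : vco (cross u v) 1 = vco u 2 * vco v 0 - vco u 0 * vco v 2.
Proof. by rewrite {1}/vco mxE inordK. Qed.
Lemma vco_cross2 u v : vco (cross u v) 2 = vco u 0 * vco v 1 - vco u 1 * vco v 0.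
Proof. by rewrite {1}/vco mxE inordK. Qed.

Lemma det3E u v w : det3 u v w =
  vco u 0 * (vco v 1 * vco w 2 - vco w 1 * vco v 2)
  - vco v 0 * (vco u 1 * vco w 2 - vco w 1 * vco u 2)
  + vco w 0 * (vco u 1 * vco v 2 - vco v 1 * vco u 2).
Proof.
rewrite /det3 (@det_mx3E _ _ (fun i j =>
  if j == 0%N then vco u i else if j == 1%N then vco v i else vco w i)) /=; first by ring.
by move=> i j; rewrite /mx3 mxE /vco !inord_val.
Qed.

End Coordinates.

Ltac vsimp := rewrite ?det3E ?(vcoD, vcoZ, vcoN, vco0, vco_cross0, vco_cross1, vco_cross2).
Ltac vring := apply: vcoP; vsimp; ring.

Section VectorIdentities.
Variable R : fieldType.
Implicit Types (u v w p q r x : 'cV[R]_3) (k : R).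

Lemma det3M (M : 'M[R]_3) u v w : det3 (M *m u) (M *m v) (M *m w) = \det M * det3 u v w.
Proof.
rewrite /det3 -det_mulmx; congr (\det _); apply/matrixP => i j.
rewrite !mxE; case: ifP => j0; [|case: ifP => j1];
  by apply: eq_bigr => l _; rewrite !mxE ?j0 ?j1.
Qed.

Lemma det3Zl k u v w : det3 (k *: u) v w = k * det3 u v w.
Proof. vsimp; ring. Qed.

Lemma det3Zr k u v w : det3 u v (k *: w) = k * det3 u v w.
Proof. vsimp; ring. Qed.

Lemma det3_lin1 k1 k2 k3 p q r : det3 (k1 *: p + k2 *: q + k3 *: r) q r = k1 * det3 p q r.
Proof. vsimp; ring. Qed.

Lemma det3_lin3 k1 k2 k3 p q r : det3 p q (k1 *: p + k2 *: q + k3 *: r) = k3 * det3 p q r.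
Proof. vsimp; ring. Qed.

(* (p x q) x (x x w) = det(p, q, w) x - det(p, q, x) w *)
Lemma cross_eq0_det3 p q x w :
  cross x w = 0 -> det3 p q w *: x = det3 p q x *: w.
Proof.
move=> xw0; apply/eqP; rewrite -subr_eq0; apply/eqP.
have -> : det3 p q w *: x - det3 p q x *: w = cross (cross p q) (cross x w) by vring.
by rewrite xw0; vring.
Qed.

End VectorIdentities.

Section Recurrence.
Variables (R : fieldType) (V : int -> 'cV[R]_3) (a b : int -> R).
Hypothesis recV : forall i, V (i + 3) = a i *: V (i + 2) + b i *: V (i + 1) + cinv V i *: V i.

Local Notation D i := (\det (rho V i)).
Local Notation c := (cinv V).
Local Notation A := (Ainv V a b).

Lemma det_rhoE i : D i = det3 (V i) (V (i + 1)) (V (i + 2)).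
Proof. by []. Qed.

Lemma det_rhoS i : D (i + 1) = c i * D i.
Proof.
rewrite (det_rhoE (i + 1)) (det_rhoE i).
have -> : i + 1 + 1 = i + 2 by ring.
have -> : i + 1 + 2 = i + 3 by ring.
by rewrite recV; vsimp; ring.
Qed.

Lemma TvE i : Tv V (i + 1) = D i *: (a i *: V (i + 2) + c i *: V i).
Proof.
rewrite /Tv addrK det_rhoE.
have -> : i + 1 + 1 = i + 2 by ring.
have -> : i + 1 + 2 = i + 3 by ring.
by rewrite recV; vring.
Qed.

Lemma TbarE i : Tbar V (i + 2) = (c (i + 3) * D i) *: (V (i + 3) - a i *: V (i + 2)).
Proof.
rewrite /Tbar addrK det_rhoE -scalerA.
have -> : i + 2 + 1 = i + 3 by ring.
have -> : i + 2 - 1 = i + 1 by ring.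
by rewrite recV; congr (_ *: _); vring.
Qed.

Lemma det3_Tv i :
  det3 (Tv V (i + 1)) (Tv V (i + 2)) (Tv V (i + 3)) =
  D i * D (i + 1) ^+ 2 * D (i + 2) * A (i + 1) * A (i + 2).
Proof.
have T2 : Tv V (i + 2) = D (i + 1) *: (a (i + 1) *: V (i + 3) + c (i + 1) *: V (i + 1)).
  by have := TvE (i + 1); rewrite -!addrA.
have T3 : Tv V (i + 3) = D (i + 2) *: (a (i + 2) *: V (i + 4) + c (i + 2) *: V (i + 2)).
  by have := TvE (i + 2); rewrite -!addrA.
have V4 : V (i + 4) = a (i + 1) *: V (i + 3) + b (i + 1) *: V (i + 2) + c (i + 1) *: V (i + 1).
  by have := recV (i + 1); rewrite -!addrA.
have D2 : D (i + 2) = c (i + 1) * D (i + 1).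
  by have := det_rhoS (i + 1); rewrite -!addrA.
rewrite TvE T2 T3 V4 recV D2 det_rhoS /Ainv (_ : i + 2 - 1 = i + 1) ?addrK; last by ring.
by rewrite det_rhoE; vsimp; ring.
Qed.

End Recurrence.

Section NormalizedLift.
Variables (R : fieldType) (N : nat) (M : 'M[R]_3) (V : int -> 'cV[R]_3) (a b : int -> R).
Hypothesis N_ge3 : (3 <= N)%N.
Hypothesis detM : \det M = 1.
Hypothesis VN_parallel : cross (V N%:Z) (M *m Tv V (-1)) = 0.
Hypothesis lift : normalized_lift N M V.
Hypothesis recV : forall i, V (i + 3) = a i *: V (i + 2) + b i *: V (i + 1) + cinv V i *: V i.
Hypothesis gen : generic V a b.

Local Notation n := N%:Z.
Local Notation D i := (\det (rho V i)).
Local Notation c := (cinv V).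
Local Notation A := (Ainv V a b).

Lemma det_rho_normalized i : 0 <= i <= n -> D i = 1.
Proof.
case: i => // k /andP[_]; rewrite lez_nat => le_kN.
by have [_ _ ->] := lift.
Qed.

Lemma cinv_normalized i : 0 <= i < n -> c i = 1.
Proof.
move=> /andP[i_ge0 i_ltN].
by have := det_rhoS recV i; rewrite !det_rho_normalized ?mulr1 //; lia.
Qed.

Lemma cinv_m1 : c (-1) * D (-1) = 1.
Proof. by rewrite -(det_rhoS recV (-1)) det_rho_normalized //; lia. Qed.

Lemma V_lift (i : int) : 0 <= i -> V (n + (i + 1)) = M *m Tv V i.
Proof.
move=> i_ge0; have [lift_fwd _ _] := lift.
by rewrite lift_fwd ?addrK //; lia.
Qed.

Lemma det_rho_lift (i : int) : 0 <= i ->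
  D (n + (i + 1)) = det3 (Tv V i) (Tv V (i + 1)) (Tv V (i + 2)).
Proof.
move=> i_ge0; rewrite det_rhoE -addrA.
rewrite (_ : n + (i + 1) + 2 = n + ((i + 2) + 1)); last by ring.
by rewrite !V_lift ?det3M ?detM ?mul1r //; lia.
Qed.

Lemma cN_det_rho : c n = D (n + 1).
Proof. by rewrite (det_rhoS recV n) (det_rho_normalized (i := n)) ?mulr1 //; lia. Qed.

Lemma cN_cm1 : c n * c (-1) = A 0 * A 1.
Proof.
have T : det3 (Tv V 0) (Tv V 1) (Tv V 2) = D (-1) * D 0 ^+ 2 * D 1 * A 0 * A 1 :=
  det3_Tv recV (-1).
rewrite cN_det_rho (det_rho_lift (i := 0)) // T.
rewrite (det_rho_normalized (i := 0)) ?(det_rho_normalized (i := 1)); try lia.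
by rewrite expr1n !mulr1 mulrC !mulrA cinv_m1 mul1r.
Qed.

Lemma cN_closed : c n = A 0 * A 1 * D (-1).
Proof. by rewrite -cN_cm1 -mulrA cinv_m1 mulr1. Qed.

Lemma cN1_cN : c (n + 1) * c n = A 1 * A 2.
Proof.
have T : det3 (Tv V 1) (Tv V 2) (Tv V 3) = D 0 * D 1 ^+ 2 * D 2 * A 1 * A 2 :=
  det3_Tv recV 0.
rewrite cN_det_rho -(det_rhoS recV) -addrA (det_rho_lift (i := 1)) // T.
by rewrite !det_rho_normalized ?expr1n ?mul1r //; lia.
Qed.

Lemma A0E : A 0 = 1 + a 0 * b (-1).
Proof. by rewrite /Ainv cinv_normalized //; lia. Qed.

Lemma A1E : A 1 = 1 + a 1 * b 0.
Proof. by rewrite /Ainv cinv_normalized //; lia. Qed.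

(* Index-normalized forms of A_{-1} and D_{-1}, so that [ring] sees matching atoms. *)
Lemma Am1E : A (-1) = c (-1) + a (-1) * b (-2).
Proof. by []. Qed.

Lemma Dm1E : D (-1) = det3 (V (-1)) (V 0) (V 1).
Proof. by []. Qed.

Lemma V2_frame : V 2 = c (-1) *: V (-1) + b (-1) *: V 0 + a (-1) *: V 1.
Proof.
have V2 : V 2 = a (-1) *: V 1 + b (-1) *: V 0 + c (-1) *: V (-1) := recV (-1).
by rewrite V2 addrC (addrC (a (-1) *: V 1)) addrA.
Qed.

Lemma V3_frame : V 3 = a 0 *: V 2 + b 0 *: V 1 + V 0.
Proof.
have V3 : V 3 = a 0 *: V 2 + b 0 *: V 1 + c 0 *: V 0 := recV 0.
by rewrite V3 cinv_normalized ?scale1r //; lia.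
Qed.

Local Notation W := (V 1 - b (-2) *: V (-1)).

Lemma Tv_m1 : Tv V (-1) = D (-2) *: W.
Proof.
have T : Tv V (-1) = D (-2) *: (a (-2) *: V 0 + c (-2) *: V (-2)) := TvE recV (-2).
have V1 : V 1 = a (-2) *: V 0 + b (-2) *: V (-1) + c (-2) *: V (-2) := recV (-2).
by rewrite T V1 addrAC addrK.
Qed.

Lemma Tv0_frame : Tv V 0 = D (-1) *: (a (-1) *: V 1 + c (-1) *: V (-1)).
Proof. exact: TvE recV (-1). Qed.

Lemma Tv1_frame : Tv V 1 = a 0 *: V 2 + V 0.
Proof.
have T : Tv V 1 = D 0 *: (a 0 *: V 2 + c 0 *: V 0) := TvE recV 0.
by rewrite T det_rho_normalized ?cinv_normalized ?scale1r //; lia.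
Qed.

Lemma Tv2_frame : Tv V 2 = a 1 *: V 3 + V 1.
Proof.
have T : Tv V 2 = D 1 *: (a 1 *: V 3 + c 1 *: V 1) := TvE recV 1.
by rewrite T det_rho_normalized ?cinv_normalized ?scale1r //; lia.
Qed.

Lemma det3_W_Tv01 : det3 W (Tv V 0) (Tv V 1) = D (-1) ^+ 2 * A (-1) * A 0.
Proof.
have [Dnz _ _] := gen.
have T : det3 (Tv V (-1)) (Tv V 0) (Tv V 1) = D (-2) * D (-1) ^+ 2 * D 0 * A (-1) * A 0 :=
  det3_Tv recV (-2).
rewrite Tv_m1 det3Zl (det_rho_normalized (i := 0)) in T; last by lia.
by apply: (mulfI (Dnz (-2))); rewrite T mulr1 !mulrA.
Qed.

Lemma det3_W_Tv12 : det3 W (Tv V 1) (Tv V 2) = - b (-2) * A 0 * A 1 * D (-1).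
Proof. by rewrite Tv1_frame Tv2_frame V3_frame V2_frame A0E A1E Dm1E; vsimp; ring. Qed.

Lemma det3_Tv1_W : det3 (Tv V 1) W (V 0) = - a 0 * A (-1) * D (-1).
Proof. by rewrite Tv1_frame V2_frame Am1E Dm1E; vsimp; ring. Qed.

Lemma det3_Tv0_W : det3 (Tv V 0) W (V 0) = - D (-1) ^+ 2 * A (-1).
Proof. by rewrite Tv0_frame Am1E Dm1E; vsimp; ring. Qed.

(* The M V_1-coordinate of V_N, by Cramer's rule in the frame M V_{-1}, M V_0, M V_1
   (of determinant D_{-1}, as det M = 1). *)
Definition spiral_scale : R := det3 (M *m V (-1)) (M *m V 0) (V n) / D (-1).
Local Notation L := spiral_scale.

Lemma VN_scale : V n = L *: (M *m W).
Proof.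
have [Dnz _ _] := gen.
have detW : det3 (M *m V (-1)) (M *m V 0) (M *m W) = D (-1).
  by rewrite det3M detM mul1r Dm1E; vsimp; ring.
have VN_W : cross (V n) (M *m W) = 0.
  have /eqP : D (-2) *: cross (V n) (M *m W) = 0.
    by rewrite -VN_parallel Tv_m1 -scalemxAr; vring.
  by rewrite scaler_eq0 (negbTE (Dnz _)) => /eqP.
have := cross_eq0_det3 (M *m V (-1)) (M *m V 0) VN_W; rewrite detW => E.
by rewrite /spiral_scale mulrC -scalerA -E scalerA mulVf ?scale1r.
Qed.

Lemma det_rhoN_scale : L * (D (-1) ^+ 2 * A (-1) * A 0) = 1.
Proof.
rewrite -det3_W_Tv01 -(det_rho_normalized (i := n)); last by lia.
rewrite det_rhoE (V_lift (i := 0)) ?(V_lift (i := 1)) // VN_scale det3Zl.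
by rewrite det3M detM mul1r.
Qed.

Lemma spiral_scale_neq0 : L != 0.
Proof.
by apply/eqP => L0; move: det_rhoN_scale; rewrite L0 mul0r => /eqP; rewrite eq_sym oner_eq0.
Qed.

Lemma Vm1_frame : V (-1) = c (n + 1) *: (Tv V 0 - (a (n - 2) * L) *: W).
Proof.
have [_ lift_bwd _] := lift.
have M_unit : M \in unitmx by rewrite unitmxE detM unitr1.
have TN : Tbar V n = c (n + 1) *: (V (n + 1) - a (n - 2) *: V n).
  have e : n - 2 + 3 = n + 1 by ring.
  by have := TbarE recV (n - 2); rewrite subrK e det_rho_normalized ?mulr1 //; lia.
have E : M *m V (-1) = Tbar V n by rewrite (lift_bwd 1) // subrK mulKVmx.
apply: (can_inj (mulKmx M_unit)); rewrite E TN (V_lift (i := 0)) // {1}VN_scale.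
by rewrite -!scalemxAr [in RHS]mulmxBr -scalemxAr scalerA.
Qed.

Lemma Vm1_coords :
  V (-1) = (c (n + 1) * (D (-1) * c (-1) + a (n - 2) * L * b (-2))) *: V (-1)
           + 0 *: V 0 + (c (n + 1) * (D (-1) * a (-1) - a (n - 2) * L)) *: V 1.
Proof. by rewrite {1}Vm1_frame Tv0_frame; vring. Qed.

Lemma cN1_scale : c (n + 1) * (1 + a (n - 2) * L * b (-2)) = 1.
Proof.
have [Dnz _ _] := gen.
have : 1 * D (-1) = c (n + 1) * (D (-1) * c (-1) + a (n - 2) * L * b (-2)) * D (-1).
  by rewrite mul1r {1}Dm1E {1}Vm1_coords det3_lin1.
by move/(mulIf (Dnz _))/esym; rewrite (mulrC (D _)) cinv_m1.
Qed.

Lemma am1_closed : a (-1) = a (n - 2) * L / D (-1).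
Proof.
have [Dnz _ _] := gen.
have cN1_neq0 : c (n + 1) != 0.
  by apply/eqP => c0; move: cN1_scale; rewrite c0 mul0r => /eqP; rewrite eq_sym oner_eq0.
apply: (mulfI (Dnz (-1))); rewrite mulrCA mulfV ?mulr1 //.
have : det3 (V (-1)) (V 0) (V (-1)) =
       c (n + 1) * (D (-1) * a (-1) - a (n - 2) * L) * D (-1).
  by rewrite {2}Vm1_coords det3_lin3.
rewrite (_ : det3 _ _ _ = 0); last by vsimp; ring.
move/esym/eqP; rewrite mulf_eq0 (negbTE (Dnz _)) orbF mulf_eq0 (negbTE cN1_neq0).
by rewrite subr_eq0 => /eqP.
Qed.

Lemma cN1_closed : c (n + 1) = L * A 0 * D (-1).
Proof.
have [Dnz _ _] := gen.
have X : D (-1) * A (-1) = 1 + a (n - 2) * L * b (-2).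
  rewrite Am1E mulrDr (mulrC _ (c _)) cinv_m1 am1_closed mulrA.
  by rewrite (mulrC (D _)) mulfVK.
have X_neq0 : 1 + a (n - 2) * L * b (-2) != 0.
  by apply/eqP => X0; move: cN1_scale; rewrite X0 mulr0 => /eqP; rewrite eq_sym oner_eq0.
have E : L * A 0 * D (-1) * (1 + a (n - 2) * L * b (-2)) = 1.
  by rewrite -X -det_rhoN_scale; ring.
by apply: (mulIf X_neq0); rewrite cN1_scale E.
Qed.

Lemma Vm2_lift : M *m V (-2) = c n *: (V n - a (n - 3) *: V (n - 1)).
Proof.
have [_ lift_bwd _] := lift.
have M_unit : M \in unitmx by rewrite unitmxE detM unitr1.
have T : Tbar V (n - 1) = c n *: (V n - a (n - 3) *: V (n - 1)).
  have e : n - 3 + 2 = n - 1 by ring.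
  by have := TbarE recV (n - 3); rewrite e subrK det_rho_normalized ?mulr1 //; lia.
have e : n - 2 + 1 = n - 1 by ring.
by rewrite (lift_bwd 2) // e mulKVmx.
Qed.

Lemma det3_lift_Vm2 X :
  c (-2) * det3 (M *m X) (V n) (M *m V (-2)) = - a (-2) * L * det3 X W (V 0).
Proof.
have V1 : V 1 = a (-2) *: V 0 + b (-2) *: V (-1) + c (-2) *: V (-2) := recV (-2).
rewrite -det3Zr VN_scale !scalemxAr det3M detM mul1r.
rewrite (_ : c (-2) *: V (-2) = W - a (-2) *: V 0); last by rewrite V1; vring.
by vsimp; ring.
Qed.

Lemma aN1_closed : a (n - 1) = a 0 / D (-1).
Proof.
have [Dnz anz Anz] := gen.
set G := M *m V (-2).
have G0 : det3 (V (n - 1)) (V n) G = 0 by rewrite /G Vm2_lift; vsimp; ring.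
have VN2 : V (n + 2) = a (n - 1) *: V (n + 1) + b (n - 1) *: V n + V (n - 1).
  have e : n - 1 + 3 = n + 2 by ring.
  have := recV (n - 1); rewrite e subrK (_ : n - 1 + 2 = n + 1); last by ring.
  by rewrite cinv_normalized ?scale1r //; lia.
have E : det3 (V (n + 2)) (V n) G = a (n - 1) * det3 (V (n + 1)) (V n) G.
  apply/eqP; rewrite -subr_eq0 -G0; apply/eqP.
  by rewrite VN2; vsimp; ring.
rewrite (V_lift (i := 1)) ?(V_lift (i := 0)) // in E.
apply: (mulfI (Dnz (-1))); rewrite mulrCA mulfV ?mulr1 //.
apply: (mulIf (mulf_neq0 (mulf_neq0 (mulf_neq0 (anz (-2)) spiral_scale_neq0) (Anz (-1)))
                         (Dnz (-1)))).
transitivity (a (n - 1) * (c (-2) * det3 (M *m Tv V 0) (V n) G)).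
  by rewrite det3_lift_Vm2 det3_Tv0_W; ring.
by rewrite mulrCA -E det3_lift_Vm2 det3_Tv1_W; ring.
Qed.

Lemma bN_closed : b n = L * b (-2) * c n.
Proof.
have E : det3 (V n) (V (n + 2)) (V (n + 3)) = - b n * D n.
  by rewrite recV det_rhoE; vsimp; ring.
rewrite (det_rho_normalized (i := n)) in E; last by lia.
rewrite VN_scale (V_lift (i := 1)) ?(V_lift (i := 2)) // det3Zl det3M detM mul1r in E.
rewrite det3_W_Tv12 mulr1 in E.
by rewrite cN_closed; apply: oppr_inj; rewrite -E; ring.
Qed.

End NormalizedLift.

Theorem mainTheorem10 (R : realFieldType) (N : nat) (M : 'M[R]_3)
    (V : int -> 'cV[R]_3) (a b : int -> R) :
  (5 <= N)%N -> (N %% 3 != 1)%N ->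
  \det M = 1 ->
  twisted_spiral N M V ->
  normalized_lift N M V ->
  (forall i : int, V (i + 3) = a i *: V (i + 2) + b i *: V (i + 1) + cinv V i *: V i) ->
  generic V a b ->
  let c := cinv V in
  let A := Ainv V a b in
  let n := N%:Z in
  (* (i) *)
  [/\ c n = \det (rho V (n + 1)),
      c n * c (-1) = A 0 * A 1,
      A 0 = a (n - 1) * c n / (A 1 * a 0)
    & b (-1) = (a (n - 1) * c n / (A 1 * a 0) - 1) / a 0] /\
  (* (ii) *)
  [/\ c (n + 1) * (c n + b n * a (n - 2)) = c n,
      c n + b n * a (n - 2) = c n ^+ 2 / (A 1 * A 2),
      b n = c n / a (n - 2) * (c n / (A 1 * A 2) - 1)
    & c (n + 1) = A 1 * A 2 / c n] /\
  (* (iii) *)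
  (a (-1) = c (n + 1) * a (n - 1) * a (n - 2) / (c n * a 0) * (1 + a 1 * b 0) /\
   a (-1) = a (n - 1) ^+ 2 * a (n - 2) * A 1 * A 2 / (a 0 ^+ 2 * c n * A 0)).
Proof.
move=> N_ge5 _ detM spiral lift recV gen c A n; rewrite {}/c {}/A {}/n.
have N_ge3 : (3 <= N)%N by apply: leq_trans N_ge5.
have VN_par : cross (V N%:Z) (M *m Tv V (-1)) = 0.
  by have [_ _ par _] := spiral; have := par 0; rewrite addr0.
have [Dnz anz Anz] := gen.
have Lnz := spiral_scale_neq0 N_ge3 detM VN_par lift recV gen.
have cN := cN_closed N_ge3 detM lift recV.
have cN1 := cN1_closed N_ge3 detM VN_par lift recV gen.
have aN1 := aN1_closed N_ge3 detM VN_par lift recV gen.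
have am1 := am1_closed N_ge3 detM VN_par lift recV gen.
have bN := bN_closed N_ge3 detM VN_par lift recV gen.
have [A0 A1] := (A0E N_ge3 lift recV, A1E N_ge3 lift recV).
have bm2 : b (-2) = ((cinv V (N%:Z + 1))^-1 - 1) / (a (N%:Z - 2) * spiral_scale N M V).
  rewrite (mulr1_eq (cN1_scale N_ge3 detM VN_par lift recV gen)) addrC addKr.
  by rewrite mulrAC mulfV ?mul1r // mulf_neq0.
have A2 : Ainv V a b 2 = cinv V (N%:Z + 1) * cinv V N%:Z / Ainv V a b 1.
  by rewrite (cN1_cN N_ge3 detM lift recV) mulrAC mulfV ?mul1r.
split; first split;
  [exact: cN_det_rho N_ge3 lift recV | exact: cN_cm1 N_ge3 detM lift recV | | |].
all: repeat split; rewrite -?A1 ?bN ?bm2 ?A2 ?cN1 ?cN ?aN1 ?am1 A0; field.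
all: by rewrite -?A0 ?anz ?Anz ?Dnz ?Lnz.
Qed.
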